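(* Let $P\in O(V,K)$, $p,x\in V$ and $X\in\mathfrak{o}(V,K)$, and let $P^\vee$ be the $(n+3)\times(n+3)$ matrix $\begin{pmatrix}1&p^*\\0&P\end{pmatrix}$. Then for every $Y\in\mathfrak{o}(V,K)$ and every $y\in V$, $$\big\langle \big(PXP^{-1}+L_{Pp,Px},\,(Px)^*\big)\,\big|\,(Y,y^* )\big\rangle=\big\langle (X,x^* )\,\big|\,(P^\vee)^{-1}(Y,y^* )P^\vee\big\rangle .$$ In other words, if $\widetilde{\mathrm{Ad}}_{P^\vee}$ denotes the linear map of $\mathfrak g^\vee$ defined by $(\widetilde{\mathrm{Ad}}_{P^\vee}a)^\sharp=\mathrm{Ad}^T_{(P^\vee)^{-1}}(a^\sharp)$ for all $a\in\mathfrak g^\vee$ (where $\mathrm{Ad}^T_{g}(\mu)=\mu\circ\mathrm{Ad}_g$ and $\mathrm{Ad}_g b=gbg^{-1}$), then $\widetilde{\mathrm{Ad}}_{(P,p^* )}(X,x^* )=\big(PXP^{-1}+L_{Pp,Px},(Px)^*\big)$.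
   Context: Let $n\ge 0$ be an integer and let $\widetilde K$ be a real symmetric $n\times n$ matrix with $\widetilde K^2=I_n$. Let $V=\mathbb R^{n+2}$ with standard basis $e_1,\dots,e_{n+2}$, and let $K=\begin{pmatrix}0&0&1\\0&\widetilde K&0\\1&0&0\end{pmatrix}$ (block sizes $1,n,1$). For $x,w\in V$ write $x^*=x^TK$ (a row vector) and $L_{u,w}=u\,w^*-w\,u^*$ (an $(n+2)\times(n+2)$ matrix). Let $O(V,K)=\{P: P^TKP=K\}$ and $\mathfrak{o}(V,K)=\{X: X^TK+KX=0\}$. Let $\mathfrak g^\vee$ be the Lie algebra of $(n+3)\times(n+3)$ matrices $\begin{pmatrix}0&x^*\\0&X\end{pmatrix}$ with $X\in\mathfrak o(V,K)$, $x\in V$ (the first row/column indexed by an extra basis vector $e_0$); such a matrix is denoted $(X,x^* )$. On $\mathfrak g^\vee$ define the nondegenerate bilinear form $\langle (X,x^* )\,|\,(\overline X,\overline x^{\,*})\rangle=\tfrac12\mathrm{tr}(X\overline X)+\overline x^{\,T}Kx$, and for $a\in\mathfrak g^\vee$ let $a^\sharp$ be the linear functional $b\mapsto\langle a|b\rangle$. Products such as $(P^\vee)^{-1}(Y,y^* )P^\vee$ are matrix products; the result lies again in $\mathfrak g^\vee$. *)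

From HB Require Import structures.
From mathcomp Require Import all_boot all_order all_algebra.
Set Implicit Arguments. Unset Strict Implicit. Unset Printing Implicit Defensive.
Import Order.TTheory GRing.Theory Num.Theory.
Local Open Scope ring_scope.

(* V = R^(n+2), indexed as 'I_(1 + n + 1) (block sizes 1, n, 1). *)
Notation dimV n := (1 + n + 1)%N.

(* K = [[0,0,1],[0,Kt,0],[1,0,0]] *)
Definition Kmat (R : realFieldType) (n : nat) (Kt : 'M[R]_n) : 'M[R]_(dimV n) :=
  block_mx (block_mx (0 : 'M_1) 0 0 Kt) (col_mx (1 : 'M_1) 0)
           (row_mx (1 : 'M_1) 0) (0 : 'M_1).

Definition star (R : realFieldType) (n : nat) (Kt : 'M[R]_n) (x : 'cV[R]_(dimV n))
  : 'rV[R]_(dimV n) := x^T *m Kmat Kt.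

Definition Lmat (R : realFieldType) (n : nat) (Kt : 'M[R]_n) (u w : 'cV[R]_(dimV n))
  : 'M[R]_(dimV n) := u *m star Kt w - w *m star Kt u.

Definition in_O (R : realFieldType) (n : nat) (Kt : 'M[R]_n) (P : 'M[R]_(dimV n)) :=
  P^T *m Kmat Kt *m P = Kmat Kt.

Definition in_o (R : realFieldType) (n : nat) (Kt : 'M[R]_n) (X : 'M[R]_(dimV n)) :=
  X^T *m Kmat Kt + Kmat Kt *m X = 0.

(* the element (X, star x) of g^vee, an (n+3)x(n+3) matrix, first index e_0 *)
Definition gv (R : realFieldType) (n : nat) (Kt : 'M[R]_n)
  (X : 'M[R]_(dimV n)) (x : 'cV[R]_(dimV n)) : 'M[R]_(1 + dimV n) :=
  block_mx (0 : 'M_1) (star Kt x) 0 X.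

Definition gv_form (R : realFieldType) (n : nat) (Kt : 'M[R]_n)
  (X : 'M[R]_(dimV n)) (x : 'cV[R]_(dimV n))
  (Xb : 'M[R]_(dimV n)) (xb : 'cV[R]_(dimV n)) : R :=
  2^-1 * \tr (X *m Xb) + (xb^T *m Kmat Kt *m x) 0 0.

Definition Pvee (R : realFieldType) (n : nat) (Kt : 'M[R]_n)
  (P : 'M[R]_(dimV n)) (p : 'cV[R]_(dimV n)) : 'M[R]_(1 + dimV n) :=
  block_mx (1 : 'M_1) (star Kt p) 0 P.

From HB Require Import structures.
From mathcomp Require Import all_boot all_order all_algebra.
Set Implicit Arguments. Unset Strict Implicit. Unset Printing Implicit Defensive.
Import Order.TTheory GRing.Theory Num.Theory.
Local Open Scope ring_scope.

(* Conjugating (Y, y^* ) by P^vee gives (P^-1 Y P, z^* ) with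
   z^* = (y^* - (Pp)^* Y) P, because P^vee is block unitriangular and
   p^* P^-1 = (Pp)^* for P in O(V,K).  The form identity then reduces to
   tr(P X P^-1 Y) = tr(X P^-1 Y P) and tr(L_{u,w} Y) = 2 w^* Y u, the latter
   because (u, w) |-> u^* Y w is antisymmetric for Y in o(V,K). *)

Section BlockUnitriangular.
Variables (R : comUnitRingType) (m1 m2 : nat).
Variables (a : 'M[R]_(m1, m2)) (B : 'M[R]_m2).
Hypothesis B_unit : B \in unitmx.

Lemma invmx_block_unitri :
  invmx (block_mx 1%:M a 0 B) = block_mx 1%:M (- (a *m invmx B)) 0 (invmx B).
Proof.
have AQ : block_mx 1%:M a 0 B *m block_mx 1%:M (- (a *m invmx B)) 0 (invmx B) = 1%:M.
  rewrite mulmx_block !mulmx0 !mul0mx !mul1mx mulmxV // !addr0 add0r.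
  by rewrite addNr -scalar_mx_block.
by rewrite -[invmx _]mulmx1 -AQ mulmxA mulVmx ?mul1mx // (mulmx1_unit AQ).1.
Qed.

Lemma block_unitri_conj (r : 'M[R]_(m1, m2)) (Y : 'M[R]_m2) :
  invmx (block_mx 1%:M a 0 B) *m block_mx 0 r 0 Y *m block_mx 1%:M a 0 B
  = block_mx 0 ((r - a *m invmx B *m Y) *m B) 0 (invmx B *m Y *m B).
Proof.
rewrite invmx_block_unitri !mulmx_block.
by rewrite !(mulmx0, mul0mx, mulmx1, mul1mx, addr0, add0r) mulNmx.
Qed.

End BlockUnitriangular.

Section SymmetricInvolution.
Variables (R : comUnitRingType) (m : nat) (K : 'M[R]_m).
Hypotheses (K_sym : K^T = K) (K_invol : K *m K = 1%:M).

Section Orthogonal.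
Variable P : 'M[R]_m.
Hypothesis P_orth : P^T *m K *m P = K.

Lemma orthogonal_unitmx : P \in unitmx.
Proof.
have PiP : K *m P^T *m K *m P = 1%:M by rewrite -2!mulmxA (mulmxA P^T) P_orth K_invol.
by rewrite (mulmx1_unit PiP).2.
Qed.

Lemma orthogonal_Kinvmx : K *m invmx P = P^T *m K.
Proof.
by rewrite -[RHS]mulmx1 -(mulmxV orthogonal_unitmx) !mulmxA P_orth.
Qed.

Lemma trmx_invmx_orthogonal : (invmx P)^T *m K = K *m P.
Proof.
by rewrite -{1}K_sym -trmx_mul orthogonal_Kinvmx trmx_mul trmxK K_sym.
Qed.

Lemma orthogonal_conj_skew (Y : 'M[R]_m) : Y^T *m K + K *m Y = 0 ->
  (invmx P *m Y *m P)^T *m K + K *m (invmx P *m Y *m P) = 0.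
Proof.
move=> Y_skew.
have -> : (invmx P *m Y *m P)^T *m K = P^T *m (Y^T *m K) *m P.
  by rewrite !trmx_mul -!mulmxA trmx_invmx_orthogonal.
have -> : K *m (invmx P *m Y *m P) = P^T *m (K *m Y) *m P.
  by rewrite !mulmxA orthogonal_Kinvmx.
by rewrite -mulmxDl -mulmxDr Y_skew mulmx0 mul0mx.
Qed.

End Orthogonal.

Lemma skew_form_antisym (Y : 'M[R]_m) (u w : 'cV[R]_m) : Y^T *m K + K *m Y = 0 ->
  (u^T *m K *m Y *m w) 0 0 = - (w^T *m K *m Y *m u) 0 0.
Proof.
move=> /eqP; rewrite addr_eq0 => /eqP KY_skew.
rewrite -[u^T *m _ *m _ *m _]trmxK [LHS]mxE !trmx_mul trmxK K_sym.
rewrite -!mulmxA (mulmxA Y^T) KY_skew.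
by rewrite mulNmx mulmxN mxE !mulmxA.
Qed.

End SymmetricInvolution.

Section CoadjointAction.
Variables (R : realFieldType) (n : nat) (Kt : 'M[R]_n).
Hypotheses (Kt_sym : Kt^T = Kt) (Kt_invol : Kt *m Kt = 1%:M).
Local Notation K := (Kmat Kt).

Lemma Kmat_sym : K^T = K.
Proof.
by rewrite /Kmat !tr_block_mx tr_row_mx tr_col_mx !trmx0 !trmx1 Kt_sym.
Qed.

Lemma Kmat_invol : K *m K = 1%:M.
Proof.
rewrite /Kmat !mulmx_block mul_col_row mul_block_col mul_row_block mul_row_col.
rewrite !(mulmx0, mul0mx, mulmx1, add0r, addr0) Kt_invol add_block_mx.
by rewrite !(addr0, add0r) row_mx0 col_mx0 -!scalar_mx_block.
Qed.

Lemma star_Kmul (r : 'rV[R]_(dimV n)) : star Kt (K *m r^T) = r.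
Proof. by rewrite /star trmx_mul trmxK Kmat_sym -mulmxA Kmat_invol mulmx1. Qed.

Lemma star_invmx_orthogonal (P : 'M[R]_(dimV n)) (p : 'cV[R]_(dimV n)) :
  in_O Kt P -> star Kt p *m invmx P = star Kt (P *m p).
Proof.
move=> P_orth; rewrite /star -mulmxA (orthogonal_Kinvmx Kmat_invol P_orth).
by rewrite trmx_mul mulmxA.
Qed.

Lemma mxtrace_Lmat (Y : 'M[R]_(dimV n)) (u w : 'cV[R]_(dimV n)) : in_o Kt Y ->
  \tr (Lmat Kt u w *m Y) = 2 * (star Kt w *m Y *m u) 0 0.
Proof.
move=> Y_skew.
rewrite /Lmat mulmxBl raddfB /= -!mulmxA !(mxtrace_mulC u) !(mxtrace_mulC w).
rewrite !trace_mx11 !mulmxA /star (skew_form_antisym Kmat_sym u w Y_skew).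
by rewrite opprK mulr_natl mulr2n.
Qed.

Lemma Pvee_conj_gv (P Y : 'M[R]_(dimV n)) (p y : 'cV[R]_(dimV n)) : in_O Kt P ->
  invmx (Pvee Kt P p) *m gv Kt Y y *m Pvee Kt P p
  = gv Kt (invmx P *m Y *m P) (K *m ((star Kt y - star Kt (P *m p) *m Y) *m P)^T).
Proof.
move=> P_orth; rewrite /gv /Pvee star_Kmul -(star_invmx_orthogonal p P_orth).
by rewrite -[1 : 'M_1]/1%:M block_unitri_conj // (orthogonal_unitmx Kmat_invol P_orth).
Qed.

Lemma gv_form_coadjoint (P X Y : 'M[R]_(dimV n)) (p x y : 'cV[R]_(dimV n)) :
  in_O Kt P -> in_o Kt Y ->
  gv_form Kt (P *m X *m invmx P + Lmat Kt (P *m p) (P *m x)) (P *m x) Y y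
  = gv_form Kt X x (invmx P *m Y *m P) (K *m ((star Kt y - star Kt (P *m p) *m Y) *m P)^T).
Proof.
move=> P_orth Y_skew.
rewrite /gv_form -!/(star Kt _) star_Kmul mulmxDl mxtraceD mxtrace_Lmat //.
have -> : \tr (P *m X *m invmx P *m Y) = \tr (X *m (invmx P *m Y *m P)).
  by rewrite -!mulmxA mxtrace_mulC !mulmxA.
rewrite (skew_form_antisym Kmat_sym (P *m x) (P *m p) Y_skew).
rewrite !mulmxBl [X in _ = _ + X]mxE [X in _ = _ + (_ + X)]mxE /star !mulmxA.
by rewrite mulrDr mulrA mulVf ?pnatr_eq0 // mul1r -addrA (addrC (- _)).
Qed.

End CoadjointAction.

Theorem lemma3 (R : realFieldType) (n : nat) (Kt : 'M[R]_n)
  (HKt_sym : Kt^T = Kt) (HKt_inv : Kt *m Kt = 1%:M)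
  (P : 'M[R]_(dimV n)) (p x : 'cV[R]_(dimV n)) (X : 'M[R]_(dimV n))
  (HP : in_O Kt P) (HX : in_o Kt X) :
  forall (Y : 'M[R]_(dimV n)) (y : 'cV[R]_(dimV n)), in_o Kt Y ->
    exists (Z : 'M[R]_(dimV n)) (z : 'cV[R]_(dimV n)),
      [/\ in_o Kt Z,
          invmx (Pvee Kt P p) *m gv Kt Y y *m Pvee Kt P p = gv Kt Z z &
          gv_form Kt (P *m X *m invmx P + Lmat Kt (P *m p) (P *m x)) (P *m x) Y y
          = gv_form Kt X x Z z].
Proof.
move=> Y y HY.
exists (invmx P *m Y *m P), (Kmat Kt *m ((star Kt y - star Kt (P *m p) *m Y) *m P)^T); split.
- exact (orthogonal_conj_skew (Kmat_sym HKt_sym) (Kmat_invol HKt_inv) HP HY).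
- exact: Pvee_conj_gv.
- exact: gv_form_coadjoint.
Qed.
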